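(* In the setting of the elastoplastic system described in the context, assume $\mathrm{rank}(R^\top D)=q$ and the safe load condition $(C+Ah(t))\cap U^\perp\neq\emptyset$ for all $t$. If $$\|A^{-1}c^--A^{-1}c^+\|_A<\|g(t_1)-g(t_2)\|_A$$ for some $0\le t_1<t_2$, where $\|x\|_A=\sqrt{\langle x,Ax\rangle}$ and $c^\pm=(c_1^\pm,\dots,c_m^\pm)^\top$, then the sweeping process $-\dot y\in N^A_{\Pi(t)\cap V}(y)$ has no solutions that are constant on $[t_1,t_2]$.
   Context: Connected network, spring $k$ joins nodes $i_k,j_k$; $D$ with $(D\xi)_k=\xi_{j_k}-\xi_{i_k}$; $A=\mathrm{diag}(a_k)$, $a_k>0$; $C=\prod_k[c_k^-,c_k^+]$. Displacement-controlled loadings $l(t)\in\mathbb{R}^q$ with incidence matrix $R$ ($(R^k)^\top D\xi=\xi_{J_k}-\xi_{I_k}$); nodal forces $f(t)=-D^\top\bar h(t)$. $L$: an $n\times q$ matrix with $R^\top DL=I_q$. $U=\{x\in D\mathbb{R}^n:R^\top x=0\}$, $V=A^{-1}U^\perp$, $P_U,P_V$ the projections of $\mathbb{R}^m=U\oplus V$ (orthogonal for $\langle u,Av\rangle$). $g(t)=P_VDL\,l(t)$, $h(t)=P_UA^{-1}\bar h(t)$, $\Pi(t)=A^{-1}C+h(t)-g(t)$. $N^A_K(x)=\{\zeta:\langle\zeta,A(c-x)\rangle\le0\ \forall c\in K\}$ if $x\in K$, $\emptyset$ otherwise. *)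

From HB Require Import structures.
From mathcomp Require Import all_boot all_order all_algebra.
From mathcomp Require Import all_classical all_reals all_analysis.
Set Implicit Arguments. Unset Strict Implicit. Unset Printing Implicit Defensive.
Import Order.TTheory GRing.Theory Num.Theory.
Import numFieldNormedType.Exports.
Local Open Scope classical_set_scope.
Local Open Scope ring_scope.

Section Network.
Context {R : realType} {n m q : nat}.

Definition ip (u v : 'cV[R]_m) : R := \sum_(k < m) u k ord0 * v k ord0.

Definition Amx (a : 'I_m -> R) : 'M[R]_m := \matrix_(k, l) (if k == l then a k else 0).
Definition Ainv (a : 'I_m -> R) : 'M[R]_m := \matrix_(k, l) (if k == l then (a k)^-1 else 0).

Definition normA (a : 'I_m -> R) (x : 'cV[R]_m) : R := Num.sqrt (ip x (Amx a *m x)).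

Definition Dmx (i j : 'I_m -> 'I_n) : 'M[R]_(m, n) :=
  \matrix_(k, x) ((x == j k)%:R - (x == i k)%:R).

(* the spring network (nodes 'I_n, spring k joins i k and j k) is connected *)
Definition spring_rel (i j : 'I_m -> 'I_n) : rel 'I_n :=
  fun u v => [exists k, ((i k == u) && (j k == v)) || ((i k == v) && (j k == u))].
Definition connected_network (i j : 'I_m -> 'I_n) : Prop :=
  forall u v : 'I_n, connect (spring_rel i j) u v.

Definition Cbox (cm cp : 'I_m -> R) : set 'cV[R]_m :=
  [set c | forall k, cm k <= c k ord0 <= cp k].

Definition Uset (i j : 'I_m -> 'I_n) (Rm : 'M[R]_(m, q)) : set 'cV[R]_m :=
  [set x | (exists xi : 'cV[R]_n, x = Dmx i j *m xi) /\ Rm^T *m x = 0].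

Definition perp (S : set 'cV[R]_m) : set 'cV[R]_m :=
  [set w | forall u, S u -> ip u w = 0].

Definition Vset (a : 'I_m -> R) (i j : 'I_m -> 'I_n) (Rm : 'M[R]_(m, q)) : set 'cV[R]_m :=
  [set v | exists w, perp (Uset i j Rm) w /\ v = Ainv a *m w].

(* projections of R^m = U (+) V *)
Definition PU a i j Rm (x : 'cV[R]_m) : 'cV[R]_m :=
  xget 0 [set u | Uset i j Rm u /\ Vset a i j Rm (x - u)].
Definition PV a i j Rm (x : 'cV[R]_m) : 'cV[R]_m := x - PU a i j Rm x.

Definition NconeA (a : 'I_m -> R) (K : set 'cV[R]_m) (x : 'cV[R]_m) : set 'cV[R]_m :=
  [set z | K x /\ forall c, K c -> ip z (Amx a *m (c - x)) <= 0].

Definition gfun a i j Rm (L : 'M[R]_(n, q)) (l : R -> 'cV[R]_q) (t : R) : 'cV[R]_m :=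
  PV a i j Rm (Dmx i j *m L *m l t).
Definition hfun a i j Rm (hbar : R -> 'cV[R]_m) (t : R) : 'cV[R]_m :=
  PU a i j Rm (Ainv a *m hbar t).

Definition Pi a i j Rm cm cp L l hbar (t : R) : set 'cV[R]_m :=
  [set Ainv a *m c + hfun a i j Rm hbar t - gfun a i j Rm L l t | c in Cbox cm cp].

Definition sweeping_solution a i j Rm cm cp L l hbar (y : R -> 'cV[R]_m) : Prop :=
  let Z t := Pi a i j Rm cm cp L l hbar t `&` Vset a i j Rm in
  {within `[0, +oo[, continuous y} /\
  (forall t, 0 <= t -> Z t (y t)) /\
  (@lebesgue_measure R).-negligible
     [set t | 0 <= t /\ ~ (derivable y t 1 /\ NconeA a (Z t) (y t) (- 'D_1 y t))].

End Network.

(** If y is constant on [t1, t2], then y t1 lies in both Π(t1) and Π(t2), so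
    A^{-1}(c1 - c2) = (g t1 - g t2) - (h t1 - h t2) for some c1, c2 ∈ C.  The
    first bracket lies in V, the second in U, and U, V are A-orthogonal, so by
    Pythagoras ‖g t1 - g t2‖_A ≤ ‖A^{-1}(c1 - c2)‖_A, which is at most
    ‖A^{-1}c^- - A^{-1}c^+‖_A coordinatewise because c1, c2 lie in the box C.
    The only real work is the decomposition R^m = U ⊕ V, needed to know that
    P_U and P_V (defined by choice) land in U and V: U is a column space B R^p,
    and the A-orthogonal projection onto it exists because B^T A B has the same
    rank as B. *)
From HB Require Import structures.
From mathcomp Require Import all_boot all_order all_algebra.
From mathcomp Require Import all_classical all_reals all_analysis.
From mathcomp Require Import ring lra zify.
Set Implicit Arguments. Unset Strict Implicit. Unset Printing Implicit Defensive.
Import Order.TTheory GRing.Theory Num.Theory.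
Import numFieldNormedType.Exports.
Local Open Scope classical_set_scope.
Local Open Scope ring_scope.

Section WeightedInnerProduct.
Context {R : realType} {m : nat}.
Variable a : 'I_m -> R.
Hypothesis a_gt0 : forall k, 0 < a k.

Lemma Amx_col (v : 'cV[R]_m) k : (Amx a *m v) k ord0 = a k * v k ord0.
Proof.
rewrite mxE (bigD1 k) //= mxE eqxx big1 ?addr0 // => l /negbTE neq_lk.
by rewrite mxE eq_sym neq_lk mul0r.
Qed.

Lemma Ainv_col (v : 'cV[R]_m) k : (Ainv a *m v) k ord0 = (a k)^-1 * v k ord0.
Proof.
rewrite mxE (bigD1 k) //= mxE eqxx big1 ?addr0 // => l /negbTE neq_lk.
by rewrite mxE eq_sym neq_lk mul0r.
Qed.

Lemma row_Amx (r : 'rV[R]_m) k : (r *m Amx a) ord0 k = r ord0 k * a k.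
Proof.
rewrite mxE (bigD1 k) //= mxE eqxx big1 ?addr0 // => l /negbTE neq_lk.
by rewrite mxE neq_lk mulr0.
Qed.

Lemma tr_Amx : (Amx a)^T = Amx a.
Proof. by apply/matrixP => k l; rewrite !mxE eq_sym; case: eqP => // ->. Qed.

Lemma AmxK (w : 'cV[R]_m) : Amx a *m (Ainv a *m w) = w.
Proof.
apply/colP => k; rewrite Amx_col Ainv_col mulrA mulfV ?mul1r //.
exact: lt0r_neq0.
Qed.

Lemma AinvK (w : 'cV[R]_m) : Ainv a *m (Amx a *m w) = w.
Proof.
apply/colP => k; rewrite Ainv_col Amx_col mulrA mulVf ?mul1r //.
exact: lt0r_neq0.
Qed.

Lemma Amx_form_eq0 (r : 'rV[R]_m) : (r *m Amx a *m r^T) ord0 ord0 = 0 -> r = 0.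
Proof.
have sq_ge0 k : 0 <= r ord0 k * a k * r ord0 k.
  by rewrite mulrAC mulr_ge0 ?(ltW (a_gt0 k)) // -expr2 sqr_ge0.
rewrite mxE (eq_bigr (fun k => r ord0 k * a k * r ord0 k)); last first.
  by move=> k _; rewrite row_Amx mxE.
move=> /psumr_eq0P sum0; apply/rowP => k; rewrite mxE.
move/eqP: (sum0 (fun k _ => sq_ge0 k) k isT).
by rewrite !mulf_eq0 (negbTE (lt0r_neq0 (a_gt0 k))) orbF orbb => /eqP.
Qed.

Lemma ipE (u v : 'cV[R]_m) : ip u v = (u^T *m v) ord0 ord0.
Proof. by rewrite /ip mxE; apply: eq_bigr => k _; rewrite mxE. Qed.

Lemma ipBr (u v w : 'cV[R]_m) : ip u (v - w) = ip u v - ip u w.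
Proof. by rewrite /ip -sumrB; apply: eq_bigr => k _; rewrite !mxE mulrBr. Qed.

Lemma ip_Amx (u v : 'cV[R]_m) :
  ip u (Amx a *m v) = \sum_k a k * u k ord0 * v k ord0.
Proof. by apply: eq_bigr => k _; rewrite Amx_col mulrCA mulrA. Qed.

Lemma ip_Amx_ge0 (v : 'cV[R]_m) : 0 <= ip v (Amx a *m v).
Proof.
rewrite ip_Amx; apply: sumr_ge0 => k _.
by rewrite -mulrA mulr_ge0 ?(ltW (a_gt0 k)) // -expr2 sqr_ge0.
Qed.

Lemma ip_Amx_pythagoras (e f : 'cV[R]_m) : ip f (Amx a *m e) = 0 ->
  ip (e - f) (Amx a *m (e - f)) = ip e (Amx a *m e) + ip f (Amx a *m f).
Proof.
rewrite !ip_Amx => orth.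
transitivity (\sum_k (a k * e k ord0 * e k ord0 + a k * f k ord0 * f k ord0)
   - 2 * \sum_k a k * f k ord0 * e k ord0).
  by rewrite mulr_sumr -sumrB; apply: eq_bigr => k _; rewrite !mxE; ring.
by rewrite orth mulr0 subr0 big_split.
Qed.

Lemma ler_normA (u v : 'cV[R]_m) :
  ip u (Amx a *m u) <= ip v (Amx a *m v) -> normA a u <= normA a v.
Proof. exact: ler_wsqrtr. Qed.

Lemma Amx_proj_exists p (B : 'M[R]_(m, p)) (x : 'cV[R]_m) :
  exists z : 'cV[R]_p, B^T *m Amx a *m (x - B *m z) = 0.
Proof.
pose G := B^T *m Amx a *m B.
have kerG r (X : 'M[R]_(r, p)) : X *m G = 0 -> X *m B^T = 0.
  move=> XG0; apply/row_matrixP => k; rewrite row_mul row0; apply: Amx_form_eq0.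
  have -> : row k X *m B^T *m Amx a *m (row k X *m B^T)^T = row k X *m G *m (row k X)^T.
    by rewrite /G trmx_mul trmxK !mulmxA.
  by rewrite -row_mul XG0 row0 !mul0mx mxE.
have rankG : \rank G = \rank B.
  have kerGB : (kermx G == kermx B^T)%MS.
    apply/andP; split; apply/sub_kermxP; first exact/kerG/mulmx_ker.
    by rewrite /G !mulmxA mulmx_ker !mul0mx.
  have := mxrank_ker G; rewrite (eqmx_rank kerGB) mxrank_ker mxrank_tr.
  by have := rank_leq_col G; have := rank_leq_col B; lia.
have sGB : (G <= B)%MS by rewrite submxMl.
have sBG : (B <= G)%MS by rewrite -(mxrank_leqif_sup sGB).2 rankG.
have /submxP [z Ez] : (x^T *m Amx a *m B <= G)%MS.
  by apply: submx_trans sBG; rewrite submxMl.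
exists z^T; rewrite mulmxBr.
have trG : G^T = G by rewrite /G !trmx_mul trmxK tr_Amx mulmxA.
have -> : B^T *m Amx a *m (B *m z^T) = (x^T *m Amx a *m B)^T.
  by rewrite Ez trmx_mul trG mulmxA.
by rewrite !trmx_mul trmxK tr_Amx mulmxA subrr.
Qed.

End WeightedInnerProduct.

Section Decomposition.
Context {R : realType} {n m q : nat}.
Variables (a : 'I_m -> R) (i j : 'I_m -> 'I_n) (Rm : 'M[R]_(m, q)).
Hypothesis a_gt0 : forall k, 0 < a k.

Lemma Uset_colspace :
  exists B : 'M[R]_(m, n), forall u, Uset i j Rm u <-> exists z, u = B *m z.
Proof.
pose M := Rm^T *m Dmx i j; pose K := kermx M^T.
exists (Dmx i j *m K^T) => u; split.
- move=> [[xi ->] RDxi0].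
  have /submxP [w Ew] : (xi^T <= K)%MS.
    by apply/sub_kermxP; rewrite -trmx_mul /M -mulmxA RDxi0 trmx0.
  by exists w^T; rewrite -mulmxA -trmx_mul -Ew trmxK.
- move=> [z ->]; split; first by exists (K^T *m z); rewrite mulmxA.
  have MK0 : M *m K^T = 0 by rewrite -[M]trmxK -trmx_mul mulmx_ker trmx0.
  by rewrite !mulmxA -/M MK0 !mul0mx.
Qed.

Lemma UV_decomposition (x : 'cV[R]_m) :
  exists u, Uset i j Rm u /\ Vset a i j Rm (x - u).
Proof.
have [B UB] := Uset_colspace.
have [z Az] := Amx_proj_exists a_gt0 B x.
exists (B *m z); split; first by apply/UB; exists z.
exists (Amx a *m (x - B *m z)); split; last by rewrite AinvK.
move=> _ /UB [v ->].
by rewrite ipE trmx_mul -mulmxA (mulmxA B^T) Az mulmx0 mxE.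
Qed.

Lemma PU_in_U (x : 'cV[R]_m) : Uset i j Rm (PU a i j Rm x).
Proof. by case: (xgetPex 0 (UV_decomposition x)). Qed.

Lemma PV_in_V (x : 'cV[R]_m) : Vset a i j Rm (PV a i j Rm x).
Proof. by case: (xgetPex 0 (UV_decomposition x)). Qed.

Lemma UsetB (u v : 'cV[R]_m) :
  Uset i j Rm u -> Uset i j Rm v -> Uset i j Rm (u - v).
Proof.
move=> [[x1 ->] R1] [[x2 ->] R2]; split; first by exists (x1 - x2); rewrite mulmxBr.
by rewrite mulmxBr R1 R2 subrr.
Qed.

Lemma VsetB (u v : 'cV[R]_m) :
  Vset a i j Rm u -> Vset a i j Rm v -> Vset a i j Rm (u - v).
Proof.
move=> [w1 [P1 ->]] [w2 [P2 ->]]; exists (w1 - w2); split; last by rewrite mulmxBr.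
by move=> z Uz; rewrite ipBr P1 // P2 // subrr.
Qed.

Lemma normA_le_subU (v u : 'cV[R]_m) :
  Vset a i j Rm v -> Uset i j Rm u -> normA a v <= normA a (v - u).
Proof.
move=> [w [Pw ->]] Uu; apply: ler_normA.
rewrite ip_Amx_pythagoras ?lerDl ?ip_Amx_ge0 // AmxK //; exact: Pw.
Qed.

End Decomposition.

Lemma sqr_sub_le_width (R : realDomainType) (lo hi x y : R) :
  lo <= x <= hi -> lo <= y <= hi -> (x - y) ^+ 2 <= (hi - lo) ^+ 2.
Proof. by move=> /andP [? ?] /andP [? ?]; nra. Qed.

Lemma normA_Ainv_box (R : realType) (m : nat) (a cm cp : 'I_m -> R) (c1 c2 : 'cV[R]_m) :
  (forall k, 0 < a k) -> Cbox cm cp c1 -> Cbox cm cp c2 ->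
  normA a (Ainv a *m c1 - Ainv a *m c2)
    <= normA a (Ainv a *m \col_k cm k - Ainv a *m \col_k cp k).
Proof.
move=> a_gt0 box1 box2; apply: ler_normA; rewrite !ip_Amx; apply: ler_sum => k _.
have colB (u v : 'cV[R]_m) : (u - v) k ord0 = u k ord0 - v k ord0 by rewrite !mxE.
rewrite !colB !Ainv_col !mxE -mulrA -[in leRHS]mulrA -!expr2 -!mulrBr !exprMn.
apply: ler_wpM2l; first exact/ltW.
apply: ler_wpM2l; first by rewrite exprn_ge0 // invr_ge0 ltW.
by rewrite -[in leRHS]sqrrN opprB; apply: sqr_sub_le_width.
Qed.

Theorem proposition3 (R : realType) (n m q : nat)
    (i j : 'I_m -> 'I_n) (a cm cp : 'I_m -> R)
    (I J : 'I_q -> 'I_n) (Rm : 'M[R]_(m, q)) (L : 'M[R]_(n, q))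
    (l : R -> 'cV[R]_q) (hbar : R -> 'cV[R]_m) (t1 t2 : R) :
  connected_network i j ->
  (forall k, i k != j k) ->
  (forall k, 0 < a k) ->
  (forall k, cm k <= cp k) ->
  (forall xi : 'cV[R]_n,
      Rm^T *m (Dmx i j *m xi) = \col_(k < q) (xi (J k) ord0 - xi (I k) ord0)) ->
  Rm^T *m Dmx i j *m L = 1%:M ->
  \rank (Rm^T *m Dmx i j) = q ->
  (forall t, 0 <= t -> exists c, Cbox cm cp c /\
      perp (Uset i j Rm) (c + Amx a *m hfun a i j Rm hbar t)) ->
  0 <= t1 -> t1 < t2 ->
  normA a (Ainv a *m \col_(k < m) cm k - Ainv a *m \col_(k < m) cp k)
    < normA a (gfun a i j Rm L l t1 - gfun a i j Rm L l t2) ->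
  ~ exists y : R -> 'cV[R]_m,
      sweeping_solution a i j Rm cm cp L l hbar y /\
      (forall t, t1 <= t <= t2 -> y t = y t1).
Proof.
move=> _ _ a_gt0 _ _ _ _ _ t1_ge0 lt_t12 big_jump [y [[_ [inZ _]] y_const]].
have t2_ge0 : 0 <= t2 by apply: le_trans t1_ge0 (ltW lt_t12).
have [[c1 box1 E1] _] := inZ t1 t1_ge0.
have [[c2 box2 E2] _] := inZ t2 t2_ge0.
rewrite y_const ?(ltW lt_t12) ?lexx // -{}E1 in E2.
set g := gfun a i j Rm L l in E2 big_jump.
set h := hfun a i j Rm hbar in E2.
have jump_eq : g t1 - g t2 - (h t1 - h t2) = Ainv a *m c1 - Ainv a *m c2.
  by apply/colP => k; move/colP/(_ k): E2; rewrite !mxE => ?; lra.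
have V_g : Vset a i j Rm (g t1 - g t2).
  by apply: VsetB; rewrite /g /gfun; exact: PV_in_V.
have U_h : Uset i j Rm (h t1 - h t2).
  by apply: UsetB; rewrite /h /hfun; exact: PU_in_U.
have le_jump : normA a (g t1 - g t2) <= normA a (Ainv a *m c1 - Ainv a *m c2).
  by rewrite -jump_eq; exact (normA_le_subU a_gt0 V_g U_h).
have := le_trans le_jump (normA_Ainv_box a_gt0 box1 box2).
by rewrite leNgt big_jump.
Qed.
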